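(* Let $\mathcal{X}$ and $\mathcal{Y}$ be closed and bounded intervals of $\mathbb{R}$. Let $\{Z_{ij}\}_{i,j\ge 1}$ be real random quantities with $\mathsf{E}(Z_{ij})=0$ and $\mathsf{E}(Z_{ij}Z_{i'j'})=\delta_{ii'}\delta_{jj'}$ (Kronecker delta). Let $\{g_i\}_{i\ge1}$ be continuous real functions on $\mathcal{X}$ and $\{h_j\}_{j\ge1}$ continuous real functions on $\mathcal{Y}$. For each $n$ define the stochastic process $$F^{(n)}(x,y)=\sum_{i=1}^n\sum_{j=1}^n Z_{ij}\,g_i(x)\,h_j(y),\qquad (x,y)\in\mathcal{X}\times\mathcal{Y}.$$ Let $F=\{F(x,y):(x,y)\in\mathcal{X}\times\mathcal{Y}\}$ be a centred real stochastic process with finite second moments. Suppose either that $F=F^{(n)}$ for some finite $n$, or that $F^{(n)}\to F$ in quadratic mean uniformly on $\mathcal{X}\times\mathcal{Y}$, i.e. $\sup_{(x,y)\in\mathcal{X}\times\mathcal{Y}}\mathsf{E}\{(F^{(n)}(x,y)-F(x,y))^2\}\to 0$ as $n\to\infty$. Then $F$ has a continuous separable covariance function.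
   Context: Random quantities are identified up to equality almost surely, and all are centred (mean zero) with finite second moments. The covariance function of a centred process $F$ on $\mathcal{X}\times\mathcal{Y}$ is $\kappa\{(x,y),(x',y')\}=\mathsf{E}\{F(x,y)F(x',y')\}$. The covariance function is called separable if there exist functions $\kappa_x$ on $\mathcal{X}\times\mathcal{X}$ and $\kappa_y$ on $\mathcal{Y}\times\mathcal{Y}$, each symmetric and non-negative definite, such that $\kappa\{(x,y),(x',y')\}=\kappa_x(x,x')\,\kappa_y(y,y')$ for all $(x,y),(x',y')\in\mathcal{X}\times\mathcal{Y}$. ''Continuous separable covariance function'' means $\kappa$ is separable and continuous on $(\mathcal{X}\times\mathcal{Y})^2$. *)

From HB Require Import structures.
From mathcomp Require Import all_boot all_order all_algebra.
From mathcomp Require Import all_classical all_reals all_analysis.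
Set Implicit Arguments. Unset Strict Implicit. Unset Printing Implicit Defensive.
Import Order.TTheory GRing.Theory Num.Theory.
Import numFieldNormedType.Exports.
Local Open Scope classical_set_scope.
Local Open Scope ring_scope.

Definition kdelta {R : realType} (i i' : nat) : R := if i == i' then 1 else 0.

(* The truncated process F^(n)(x,y) = sum_{i<n} sum_{j<n} Z_ij g_i(x) h_j(y)
   (indices start at 0 instead of 1). *)
Definition Fn {d} {T : measurableType d} {R : realType}
  (Z : nat -> nat -> T -> R) (g h : nat -> R -> R) (n : nat) (x y : R) : T -> R :=
  fun w => \sum_(i < n) \sum_(j < n) Z i j w * g i x * h j y.

(* Covariance function of a centred process F:
   kappa((x,y),(x',y')) = E{F(x,y) F(x',y')} (finite by the second-moment assumption). *)
Definition covfun {d} {T : measurableType d} {R : realType} (P : probability T R)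
  (F : R -> R -> T -> R) (p : (R * R) * (R * R)) : R :=
  fine ('E_P[(fun w => F p.1.1 p.1.2 w * F p.2.1 p.2.2 w)%R])%E.

Definition symmetric_on {R : realType} (A : set R) (k : R -> R -> R) :=
  forall x x', A x -> A x' -> k x x' = k x' x.

Definition nonneg_definite_on {R : realType} (A : set R) (k : R -> R -> R) :=
  forall (n : nat) (t : 'I_n -> R) (c : 'I_n -> R), (forall i, A (t i)) ->
    0 <= \sum_(i < n) \sum_(j < n) c i * c j * k (t i) (t j).

Definition separable_cov {R : realType} (X Y : set R)
  (kappa : (R * R) * (R * R) -> R) :=
  exists (kx ky : R -> R -> R),
    [/\ symmetric_on X kx, nonneg_definite_on X kx,
        symmetric_on Y ky, nonneg_definite_on Y ky &
        forall x y x' y', X x -> Y y -> X x' -> Y y' ->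
          kappa ((x, y), (x', y')) = kx x x' * ky y y'].

From HB Require Import structures.
From mathcomp Require Import all_boot all_order all_algebra.
From mathcomp Require Import all_classical all_reals all_analysis.
From mathcomp Require Import measurable_realfun ring lra.
Import Order.TTheory GRing.Theory Num.Theory.
Import numFieldNormedType.Exports.
Local Open Scope classical_set_scope.
Local Open Scope ring_scope.

(* The covariance of F^(n) is, by orthonormality of the Z_ij, the product kernel
   (sum_i g_i(x) g_i(x')) (sum_j h_j(y) h_j(y')), which is continuous.  Uniform
   convergence of F^(n) to F in quadratic mean bounds E F(x,y)^2 on the rectangle
   and, by Cauchy-Schwarz, makes these covariances converge uniformly to that of F,
   which is therefore continuous (in the finite case the sequence is constant).
   Every product kernel k satisfies
     k((x,y),(x',y')) k(p0,p0) = k((x,y0),(x',y0)) k((x0,y),(x0,y'))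
   for p0 = (x0,y0), and so does the limit.  If kappa(p0,p0) <> 0 for some p0, this
   identity exhibits kappa as a product of two sections of kappa; otherwise kappa
   vanishes on the diagonal, hence everywhere by Cauchy-Schwarz. *)

Lemma quadratic_ge0_discriminant {R : realFieldType} (A B C : R) :
  (forall t, 0 <= A + 2 * t * B + t ^+ 2 * C) -> 0 <= C -> B ^+ 2 <= A * C.
Proof.
move=> H C_ge0.
have [C0|C_neq0] := eqVneq C 0.
  have [B0|B_neq0] := eqVneq B 0; first by rewrite B0 C0 expr0n mulr0.
  have := H (- (A + 1) / (2 * B)); rewrite C0 mulr0 addr0.
  have -> : 2 * (- (A + 1) / (2 * B)) * B = - (A + 1) by field; rewrite B_neq0.
  lra.
have C_gt0 : 0 < C by rewrite lt_def C_neq0.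
have := H (- B / C).
have -> : A + 2 * (- B / C) * B + (- B / C) ^+ 2 * C = A - B ^+ 2 / C by field.
by rewrite subr_ge0 ler_pdivrMr.
Qed.

Section kernels.
Context {R : realType}.

Definition trunc_kernel (k : nat -> R -> R) n x x' : R := \sum_(i < n) k i x * k i x'.

Definition prod_kernel (kx ky : R -> R -> R) (z : (R * R) * (R * R)) : R :=
  kx z.1.1 z.2.1 * ky z.1.2 z.2.2.

Definition symmetric_kernel {S} (D : set S) (K : S * S -> R) :=
  forall p q, D p -> D q -> K (p, q) = K (q, p).

Definition nonneg_definite_kernel {S} (D : set S) (K : S * S -> R) :=
  forall n (t : 'I_n -> S) (c : 'I_n -> R), (forall i, D (t i)) ->
    0 <= \sum_(i < n) \sum_(j < n) c i * c j * K (t i, t j).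

Lemma trunc_kernel_diag_ge0 k n x : 0 <= trunc_kernel k n x x.
Proof. by apply: sumr_ge0 => i _; rewrite -expr2 sqr_ge0. Qed.

Lemma nonneg_definite_kernel_diag {S} {D : set S} {K : S * S -> R} p :
  nonneg_definite_kernel D K -> D p -> 0 <= K (p, p).
Proof.
by move=> KD Dp; have := KD 1%N (fun=> p) (fun=> 1) (fun=> Dp); rewrite !big_ord1 !mul1r.
Qed.

Lemma nonneg_definite_kernel_cauchy_schwarz {S} {D : set S} {K : S * S -> R} p q :
  symmetric_kernel D K -> nonneg_definite_kernel D K -> D p -> D q ->
  K (p, q) ^+ 2 <= K (p, p) * K (q, q).
Proof.
move=> Ksym KD Dp Dq; apply: quadratic_ge0_discriminant => [s|]; last first.
  exact: nonneg_definite_kernel_diag KD Dq.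
pose t (i : 'I_2) := if i == ord0 then p else q.
pose c (i : 'I_2) : R := if i == ord0 then 1 else s.
have Dt i : D (t i) by rewrite /t; case: ifP.
have := KD 2%N t c Dt; rewrite !big_ord_recr !big_ord0 /= /t /c /= (Ksym q p) //.
by rewrite expr2; lra.
Qed.

End kernels.

Section separable_limit.
Context {R : realType}.
Context {X Y : set R} {K : (R * R) * (R * R) -> R}.
Hypotheses (Ksym : symmetric_kernel (X `*` Y) K) (KD : nonneg_definite_kernel (X `*` Y) K).

Lemma separable_cov_of_factorization :
  (forall x y x' y' x0 y0, X x -> Y y -> X x' -> Y y' -> X x0 -> Y y0 ->
     K ((x, y), (x', y')) * K ((x0, y0), (x0, y0)) =
     K ((x, y0), (x', y0)) * K ((x0, y), (x0, y'))) ->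
  separable_cov X Y K.
Proof.
move=> Kfact.
have [[[x0 y0] [[Xx0 Yy0] K0_neq0]]|K_diag0] :=
  pselect (exists p, (X `*` Y) p /\ K (p, p) != 0).
  have K0_gt0 : 0 < K ((x0, y0), (x0, y0)).
    by rewrite lt_def K0_neq0 (nonneg_definite_kernel_diag _ KD (conj Xx0 Yy0)).
  exists (fun x x' => K ((x, y0), (x', y0))),
    (fun y y' => K ((x0, y), (x0, y')) / K ((x0, y0), (x0, y0))); split.
  - by move=> x x' Xx Xx'; apply: Ksym.
  - by move=> n t c Xt; exact: (KD n (fun i => (t i, y0)) c (fun i => conj (Xt i) Yy0)).
  - by move=> y y' Yy Yy'; rewrite Ksym.
  - move=> n t c Yt /=; under eq_bigr do under eq_bigr do rewrite mulrA.
    under eq_bigr do rewrite -mulr_suml.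
    rewrite -mulr_suml divr_ge0 ?(ltW K0_gt0) //.
    exact: (KD n (fun i => (x0, t i)) c (fun i => conj Xx0 (Yt i))).
  - move=> x y x' y' Xx Yy Xx' Yy'.
    by rewrite mulrA -Kfact // mulfK.
have K0 p : (X `*` Y) p -> K (p, p) = 0.
  move=> XYp; have [//|K_neq0] := eqVneq (K (p, p)) 0.
  by case: K_diag0; exists p.
have nnd0 (A : set R) : nonneg_definite_on A (fun _ _ => 0).
  by move=> n t c _; rewrite big1 // => i _; rewrite big1 // => j _; rewrite mulr0.
exists (fun _ _ => 0), (fun _ _ => 0); split; [done | exact: nnd0 | done | exact: nnd0 |].
move=> x y x' y' Xx Yy Xx' Yy'; rewrite mulr0; apply/eqP.
have := nonneg_definite_kernel_cauchy_schwarz (x, y) (x', y') Ksym KD (conj Xx Yy) (conj Xx' Yy').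
by rewrite !K0 // mul0r -sqrf_eq0 eq_le sqr_ge0 andbT.
Qed.

Lemma separable_cov_of_limit (kx ky : nat -> R -> R -> R) :
  (forall z, ((X `*` Y) `*` (X `*` Y)) z -> prod_kernel (kx n) (ky n) z @[n --> \oo] --> K z) ->
  separable_cov X Y K.
Proof.
move=> kK; apply: separable_cov_of_factorization => x y x' y' x0 y0 Xx Yy Xx' Yy' Xx0 Yy0.
pose k n := prod_kernel (kx n) (ky n).
have cvgK u v u' v' : X u -> Y v -> X u' -> Y v' ->
    k n ((u, v), (u', v')) @[n --> \oo] --> K ((u, v), (u', v')).
  by move=> Xu Yv Xu' Yv'; apply: kK.
have lhs : k n ((x, y), (x', y')) * k n ((x0, y0), (x0, y0)) @[n --> \oo] -->
    K ((x, y), (x', y')) * K ((x0, y0), (x0, y0)) by apply: cvgM; exact: cvgK.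
have rhs : k n ((x, y), (x', y')) * k n ((x0, y0), (x0, y0)) @[n --> \oo] -->
    K ((x, y0), (x', y0)) * K ((x0, y), (x0, y')).
  have kfact n : k n ((x, y), (x', y')) * k n ((x0, y0), (x0, y0)) =
      k n ((x, y0), (x', y0)) * k n ((x0, y), (x0, y')) by rewrite /k /prod_kernel /=; ring.
  by under eq_cvg do rewrite kfact; apply: cvgM; exact: cvgK.
exact: cvg_unique lhs rhs.
Qed.

End separable_limit.

Section square_integrable.
Context {d} {T : measurableType d} {R : realType} {P : probability T R}.
Implicit Types (f g u : T -> R) (k : R).

Definition L2 f := measurable_fun setT f /\ P.-integrable setT (fun w => (f w ^+ 2)%:E).

Definition inner f g : R := fine (\int[P]_w (f w * g w)%:E).

Lemma L2_integrableM {f g} : L2 f -> L2 g -> P.-integrable setT (fun w => (f w * g w)%:E).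
Proof.
move=> [mf f2] [mg g2].
apply: (le_integrable measurableT _ _ (integrableD measurableT f2 g2)).
  by apply/measurable_EFinP; exact: measurable_funM.
move=> w _ /=; rewrite lee_fin [leRHS]ger0_norm ?addr_ge0 ?sqr_ge0// normrM.
rewrite -[f w ^+ 2]real_normK ?num_real// -[g w ^+ 2]real_normK ?num_real//.
have := sqr_ge0 (`|f w| - `|g w|); have := normr_ge0 (f w); have := normr_ge0 (g w).
nra.
Qed.

Lemma L2_cst0 : L2 (fun=> 0).
Proof.
split; first exact: measurable_cst.
by apply: eq_integrable (integrable0 _ _) => // w _ /=; rewrite expr0n.
Qed.

Lemma L2D {f g} : L2 f -> L2 g -> L2 (f \+ g).
Proof.
move=> Lf Lg; split; first by apply: measurable_funD; [case: Lf | case: Lg].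
have := integrableD measurableT (integrableD measurableT Lf.2 Lg.2)
  (integrableZl measurableT 2 (L2_integrableM Lf Lg)).
by apply: eq_integrable => // w _ /=; rewrite -EFinM -!EFinD; congr (_%:E); ring.
Qed.

Lemma L2Z k {f} : L2 f -> L2 (fun w => k * f w).
Proof.
move=> [mf f2]; split; first by apply: measurable_funM => //; exact: measurable_cst.
have := integrableZl measurableT (k ^+ 2) f2.
by apply: eq_integrable => // w _ /=; rewrite -EFinM; congr (_%:E); ring.
Qed.

Lemma L2B {f g} : L2 f -> L2 g -> L2 (f \- g).
Proof.
move=> Lf Lg; have := L2D Lf (L2Z (-1) Lg).
by congr L2; apply/funext => w /=; ring.
Qed.

Lemma L2_sum I (r : seq I) (u : I -> T -> R) :
  (forall i, L2 (u i)) -> L2 (fun w => \sum_(i <- r) u i w).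
Proof.
move=> Lu; elim: r => [|i r IHr].
  have -> : (fun w => \sum_(i <- [::]) u i w) = fun=> 0.
    by apply/funext => w; rewrite big_nil.
  exact: L2_cst0.
by have := L2D (Lu i) IHr; congr L2; apply/funext => w; rewrite big_cons.
Qed.

Lemma innerE {f g} : L2 f -> L2 g -> (\int[P]_w (f w * g w)%:E)%E = (inner f g)%:E.
Proof. by move=> Lf Lg; rewrite fineK// integrable_fin_num// L2_integrableM. Qed.

Lemma innerC f g : inner f g = inner g f.
Proof. by rewrite /inner; under eq_integral do rewrite mulrC. Qed.

Lemma inner_ge0 f : 0 <= inner f f.
Proof.
by rewrite /inner fine_ge0// integral_ge0// => w _; rewrite lee_fin -expr2 sqr_ge0.
Qed.

Lemma innerDl {f g u} : L2 f -> L2 g -> L2 u -> inner (f \+ g) u = inner f u + inner g u.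
Proof.
move=> Lf Lg Lu; rewrite /inner; under eq_integral do rewrite /= mulrDl EFinD.
rewrite integralD//; try exact: L2_integrableM.
by rewrite fineD// integrable_fin_num// L2_integrableM.
Qed.

Lemma innerZl k {f g} : L2 f -> L2 g -> inner (fun w => k * f w) g = k * inner f g.
Proof.
move=> Lf Lg; rewrite /inner; under eq_integral do rewrite -mulrA EFinM.
rewrite integralZl//; last exact: L2_integrableM.
by rewrite fineM// integrable_fin_num// L2_integrableM.
Qed.

Lemma innerDr {f g u} : L2 f -> L2 g -> L2 u -> inner u (f \+ g) = inner u f + inner u g.
Proof. by move=> Lf Lg Lu; rewrite innerC innerDl // ![inner _ u]innerC. Qed.

Lemma innerZr k {f g} : L2 f -> L2 g -> inner g (fun w => k * f w) = k * inner g f.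
Proof. by move=> Lf Lg; rewrite innerC innerZl // innerC. Qed.

Lemma inner_suml I (r : seq I) (u : I -> T -> R) g : (forall i, L2 (u i)) -> L2 g ->
  inner (fun w => \sum_(i <- r) u i w) g = \sum_(i <- r) inner (u i) g.
Proof.
move=> Lu Lg; elim: r => [|i r IHr].
  by rewrite big_nil /inner; under eq_integral do rewrite big_nil mul0r; rewrite integral0.
rewrite big_cons -IHr -innerDl //; last exact: L2_sum.
by congr inner; apply/funext => w; rewrite big_cons.
Qed.

Lemma inner_sum (I J : finType) (a : I -> R) (b : J -> R) (u : I -> T -> R) (v : J -> T -> R) :
  (forall i, L2 (u i)) -> (forall j, L2 (v j)) ->
  inner (fun w => \sum_i a i * u i w) (fun w => \sum_j b j * v j w) =
  \sum_i \sum_j a i * b j * inner (u i) (v j).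
Proof.
move=> Lu Lv; have Lbv : L2 (fun w => \sum_j b j * v j w) by apply: L2_sum => j; exact: L2Z.
rewrite inner_suml //; last by move=> i; exact: L2Z.
apply: eq_bigr => i _; rewrite innerZl // innerC inner_suml //; last by move=> j; exact: L2Z.
by rewrite mulr_sumr; apply: eq_bigr => j _; rewrite innerZl // innerC mulrA [a i * _]mulrC.
Qed.

Lemma eq_inner_ae {f f' g g'} : L2 f -> L2 f' -> L2 g -> L2 g' ->
  {ae P, forall w, f w = f' w} -> {ae P, forall w, g w = g' w} -> inner f g = inner f' g'.
Proof.
move=> Lf Lf' Lg Lg' ff' gg'; rewrite /inner (ae_eq_integral (fun w => (f' w * g' w)%:E))//.
- exact: measurable_int (L2_integrableM Lf Lg).
- exact: measurable_int (L2_integrableM Lf' Lg').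
by apply: filterS2 ff' gg' => w -> ->.
Qed.

Lemma inner_quadratic t {f g} : L2 f -> L2 g ->
  inner (fun w => f w + t * g w) (fun w => f w + t * g w) =
  inner f f + 2 * t * inner f g + t ^+ 2 * inner g g.
Proof.
move=> Lf Lg; have Ltg := L2Z t Lg.
have Lftg : L2 (fun w => f w + t * g w) by exact: L2D.
by rewrite (innerDl Lf Ltg) ?innerDr ?innerZl ?innerZr// [inner g f]innerC; ring.
Qed.

Lemma inner_cauchy_schwarz {f g} : L2 f -> L2 g -> inner f g ^+ 2 <= inner f f * inner g g.
Proof.
move=> Lf Lg; apply: quadratic_ge0_discriminant; last exact: inner_ge0.
by move=> t; rewrite -inner_quadratic //; exact: inner_ge0.
Qed.

Lemma inner_le_sub {f g} : L2 f -> L2 g ->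
  inner f f <= 2 * inner g g + 2 * inner (f \- g) (f \- g).
Proof.
move=> Lf Lg; have Lfg := L2B Lf Lg.
have := inner_quadratic 1 Lg Lfg; have := inner_quadratic (-1) Lg Lfg.
have -> : (fun w => g w + 1 * (f w - g w)) = f by apply/funext => w; ring.
have := inner_ge0 (fun w => g w + (-1) * (f w - g w)).
rewrite expr1n sqrrN expr1n; lra.
Qed.

Lemma inner_self_subC f g : inner (f \- g) (f \- g) = inner (g \- f) (g \- f).
Proof. by rewrite /inner; under eq_integral do rewrite -mulrNN !opprB. Qed.

Lemma inner_sub_sqr_le {f g f' g'} : L2 f -> L2 g -> L2 f' -> L2 g' ->
  (inner f' g' - inner f g) ^+ 2 <=
  2 * (inner (f' \- f) (f' \- f) * inner g g) + 2 * (inner f' f' * inner (g' \- g) (g' \- g)).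
Proof.
move=> Lf Lg Lf' Lg'; have Lff := L2B Lf' Lf; have Lgg := L2B Lg' Lg.
have -> : inner f' g' - inner f g = inner (f' \- f) g + inner f' (g' \- g).
  have -> : inner f' g' = inner f' (g' \- g) + inner f' g.
    by rewrite -(innerDr Lgg Lg Lf'); congr inner; apply/funext => w /=; ring.
  have -> : inner f' g = inner (f' \- f) g + inner f g.
    by rewrite -(innerDl Lff Lf Lg); congr inner; apply/funext => w /=; ring.
  ring.
have := inner_cauchy_schwarz Lff Lg; have := inner_cauchy_schwarz Lf' Lgg.
have := sqr_ge0 (inner (f' \- f) g - inner f' (g' \- g)); nra.
Qed.

Lemma inner_orthonormal_sum (I : finType) (a b : I -> R) (u : I -> T -> R) :
  (forall i, L2 (u i)) -> (forall i j, inner (u i) (u j) = (i == j)%:R) ->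
  inner (fun w => \sum_i a i * u i w) (fun w => \sum_i b i * u i w) = \sum_i a i * b i.
Proof.
move=> Lu u_orth; rewrite inner_sum //; apply: eq_bigr => i _.
rewrite (bigD1 i) //= u_orth eqxx mulr1 big1 ?addr0 // => j ji.
by rewrite u_orth eq_sym (negbTE ji) mulr0.
Qed.

Lemma inner_gram_ge0 n (u : 'I_n -> T -> R) (c : 'I_n -> R) : (forall i, L2 (u i)) ->
  0 <= \sum_(i < n) \sum_(j < n) c i * c j * inner (u i) (u j).
Proof. by move=> Lu; rewrite -inner_sum //; exact: inner_ge0. Qed.

Lemma symmetric_inner_kernel {S} (D : set S) (X : S -> T -> R) :
  symmetric_kernel D (fun pq => inner (X pq.1) (X pq.2)).
Proof. by move=> p q _ _; rewrite innerC. Qed.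

Lemma nonneg_definite_inner_kernel {S} (D : set S) (X : S -> T -> R) :
  (forall p, D p -> L2 (X p)) -> nonneg_definite_kernel D (fun pq => inner (X pq.1) (X pq.2)).
Proof. by move=> LX n t c Dt /=; apply: inner_gram_ge0 => i; exact: LX. Qed.

Section uniform_approximation.
Context {S : Type} {D : set S} {F : S -> T -> R} {G : nat -> S -> T -> R}.
Hypotheses (LF : forall p, D p -> L2 (F p)) (LG : forall n p, L2 (G n p)).
Hypothesis G_bounded : forall n, exists B, forall p, D p -> inner (G n p) (G n p) <= B.
Hypothesis G_cvg : forall del, 0 < del ->
  \forall n \near \oo, forall p, D p -> inner (G n p \- F p) (G n p \- F p) <= del.

Lemma L2_uniform_limit_bounded : exists2 M, 0 <= M & forall p, D p -> inner (F p) (F p) <= M.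
Proof.
have [N _ GN] := G_cvg _ ltr01; have [B GB] := G_bounded N.
exists (2 * `|B| + 2) => [|p Dp]; first by rewrite addr_ge0 ?mulr_ge0.
have := inner_le_sub (LF p Dp) (LG N p); rewrite inner_self_subC.
have := GN N (leqnn N) p Dp; have := GB p Dp; have := ler_norm B; lra.
Qed.

Lemma inner_uniform_cvg eps : 0 < eps -> \forall n \near \oo, forall p q, D p -> D q ->
  `|inner (F p) (F q) - inner (G n p) (G n q)| <= eps.
Proof.
move=> eps_gt0; have [M M_ge0 FM] := L2_uniform_limit_bounded.
(* Once [G n] is [del]-close to [F] with [del <= 1], [inner_sub_sqr_le] bounds the
   squared error by [2 del M + 2 (2 M + 2) del = del (6 M + 4)]. *)
pose del := Num.min 1 (eps ^+ 2 / (6 * M + 4)).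
have del_gt0 : 0 < del by rewrite lt_min ltr01 divr_gt0 ?exprn_gt0//; lra.
have del_le1 : del <= 1 by rewrite ge_min lexx.
have del_small : del * (6 * M + 4) <= eps ^+ 2.
  by rewrite -ler_pdivlMr ?ge_min ?lexx ?orbT//; lra.
apply: filterS (G_cvg _ del_gt0) => n Gn p q Dp Dq.
have Gp := Gn p Dp; have Gq := Gn q Dq.
have GM : inner (G n p) (G n p) <= 2 * M + 2.
  have := inner_le_sub (LG n p) (LF p Dp); have := FM p Dp; lra.
have := inner_sub_sqr_le (LF p Dp) (LF q Dq) (LG n p) (LG n q).
have := FM q Dq; have := inner_ge0 (G n p \- F p); have := inner_ge0 (G n q \- F q).
have := inner_ge0 (F q); have := inner_ge0 (G n p).
move=> *; rewrite distrC -(ler_sqr (normr_ge0 _) (ltW eps_gt0)) real_normK ?num_real//; nra.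
Qed.

End uniform_approximation.

End square_integrable.
Arguments L2 {d T R} P f.
Arguments inner {d T R} P f g.

Section continuity.
Context {R : realType}.

Lemma within_continuous_comp_into {U : topologicalType} {D : set U} {A : set R}
    {u : U -> R} {f : R -> R} :
  continuous u -> (forall z, D z -> A (u z)) -> {within A, continuous f} ->
  {within D, continuous (f \o u)}.
Proof.
move=> cu DA /subspace_continuousP cf; apply/subspace_continuousP => z Dz V.
move=> /(cf _ (DA z Dz)) fV; have := cu z _ fV; rewrite /within /= /nbhs /=.
apply: filterS => w uV Dw.
exact: uV (DA w Dw).
Qed.

Lemma continuous_trunc_kernel {U : topologicalType} {D : set U} {A : set R}
    {k : nat -> R -> R} n {u v : U -> R} :
  (forall i, {within A, continuous k i}) -> continuous u -> continuous v ->
  (forall z, D z -> A (u z)) -> (forall z, D z -> A (v z)) ->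
  {within D, continuous (fun z => trunc_kernel k n (u z) (v z))}.
Proof.
move=> ck cu cv DAu DAv; rewrite /trunc_kernel; elim: n => [|n IHn].
  by under eq_fun do rewrite big_ord0; exact: cst_continuous.
under eq_fun do rewrite big_ord_recr /=.
apply: within_continuousD => // z; apply: continuousM.
  exact: (within_continuous_comp_into cu DAu (ck n) z).
exact: (within_continuous_comp_into cv DAv (ck n) z).
Qed.

Lemma trunc_kernel_diag_bounded {a b : R} {k : nat -> R -> R} n : a <= b ->
  (forall i, {within `[a, b], continuous k i}) ->
  exists B, forall x, x \in `[a, b] -> trunc_kernel k n x x <= B.
Proof.
move=> ab ck; have : {within `[a, b], continuous (fun x => trunc_kernel k n x x)}.
  by apply: continuous_trunc_kernel => // x; exact: cvg_id.
by move=> /(EVT_max ab) [x0 _ kx0]; exists (trunc_kernel k n x0 x0).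
Qed.

End continuity.

Section uniform_convergence.
Context {R : realType}.

Lemma uniform_cvg_le {U : choiceType} (A : set U) (k : nat -> U -> R) (K : U -> R) :
  (forall eps, 0 < eps -> \forall n \near \oo, forall z, A z -> `|K z - k n z| <= eps) ->
  {uniform A, k @ \oo --> K}.
Proof.
move=> kK P /uniform_nbhs [E [[eps /= eps_gt0 epsE] EP]].
have : 0 < eps / 2 by rewrite divr_gt0.
move=> /kK; apply: filterS => n kn; apply: EP => z Az; apply: epsE => /=.
by apply: (le_lt_trans (kn z Az)); rewrite ltr_pdivrMr //; lra.
Qed.

Lemma uniform_cvg_pointwise {U : choiceType} (A : set U) (k : nat -> U -> R) (K : U -> R) z :
  A z -> {uniform A, k @ \oo --> K} -> k ^~ z @ \oo --> K z.
Proof.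
move=> Az; have zA : [set z] `<=` A by move=> _ ->.
by move=> /(uniform_subset_cvg _ zA); rewrite uniform_set1.
Qed.

End uniform_convergence.

Section truncated_process.
Context {d} {T : measurableType d} {R : realType} {P : probability T R}.
Context {Z : nat -> nat -> T -> R} {g h : nat -> R -> R}.
Hypotheses (Z_L2 : forall i j, L2 P (Z i j))
  (Z_orthonormal : forall i j i' j', inner P (Z i j) (Z i' j') = kdelta i i' * kdelta j j').

Lemma FnE n x y :
  Fn Z g h n x y = fun w => \sum_(p : 'I_n * 'I_n) (g p.1 x * h p.2 y) * Z p.1 p.2 w.
Proof. by apply/funext => w; rewrite /Fn pair_bigA; apply: eq_bigr => -[i j] _ /=; ring. Qed.

Lemma L2_Fn n x y : L2 P (Fn Z g h n x y).
Proof. by rewrite FnE; apply: L2_sum => p; exact: L2Z. Qed.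

Lemma inner_Fn n x y x' y' :
  inner P (Fn Z g h n x y) (Fn Z g h n x' y') = trunc_kernel g n x x' * trunc_kernel h n y y'.
Proof.
rewrite !FnE inner_orthonormal_sum => [|p|[i j] [i' j']]; last 2 first.
- exact: Z_L2.
- rewrite Z_orthonormal /kdelta xpair_eqE !val_eqE.
  by case: (i == i'); case: (j == j'); rewrite ?mulr1 ?mulr0.
by rewrite /trunc_kernel big_distrlr pair_bigA; apply: eq_bigr => -[i j] _ /=; ring.
Qed.

Context {a b c e : R} {F : R -> R -> T -> R}.
Hypotheses (ab : a <= b) (ce : c <= e).
Hypotheses (g_cont : forall i, {within `[a, b], continuous g i})
  (h_cont : forall j, {within `[c, e], continuous h j}).
Hypothesis F_L2 : forall x y, x \in `[a, b] -> y \in `[c, e] -> L2 P (F x y).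

Let D := `[a, b] `*` `[c, e].
Let trunc_cov n := prod_kernel (trunc_kernel g n) (trunc_kernel h n).
Let cov z := inner P (F z.1.1 z.1.2) (F z.2.1 z.2.2).

Lemma continuous_trunc_cov n : {within D `*` D, continuous (trunc_cov n)}.
Proof.
have c11 : continuous (fun z : (R * R) * (R * R) => z.1.1).
  by move=> z; apply: continuous_comp; exact: cvg_fst.
have c12 : continuous (fun z : (R * R) * (R * R) => z.1.2).
  by move=> z; apply: continuous_comp; [exact: cvg_fst | exact: cvg_snd].
have c21 : continuous (fun z : (R * R) * (R * R) => z.2.1).
  by move=> z; apply: continuous_comp; [exact: cvg_snd | exact: cvg_fst].
have c22 : continuous (fun z : (R * R) * (R * R) => z.2.2).
  by move=> z; apply: continuous_comp; exact: cvg_snd.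
rewrite /trunc_cov /prod_kernel => z; apply: (@continuousM R (subspace (D `*` D))).
  by apply: (continuous_trunc_kernel n g_cont c11 c21) => -[[? ?] [? ?]] [[]] //= _ _ [].
by apply: (continuous_trunc_kernel n h_cont c12 c22) => -[[? ?] [? ?]] [[]] //= _ _ [].
Qed.

Lemma inner_Fn_bounded n :
  exists B, forall p, D p -> inner P (Fn Z g h n p.1 p.2) (Fn Z g h n p.1 p.2) <= B.
Proof.
have [Bg gB] := trunc_kernel_diag_bounded n ab g_cont.
have [Bh hB] := trunc_kernel_diag_bounded n ce h_cont.
exists (Bg * Bh) => -[x y] [Xx Yy]; rewrite inner_Fn.
by apply: ler_pM; rewrite ?trunc_kernel_diag_ge0 ?gB ?hB.
Qed.

Lemma trunc_cov_uniform_cvg_ae n0 :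
  (forall x y, x \in `[a, b] -> y \in `[c, e] -> {ae P, forall w, F x y w = Fn Z g h n0 x y w}) ->
  {uniform D `*` D, (fun=> trunc_cov n0) @ \oo --> cov}.
Proof.
move=> FFn; apply: uniform_cvg_le => eps eps_gt0; apply: nearW => _.
move=> [[x y] [x' y']] [[Xx Yy] [Xx' Yy']]; rewrite /cov /trunc_cov /prod_kernel /= -inner_Fn.
rewrite (eq_inner_ae (F_L2 _ _ Xx Yy) (L2_Fn _ _ _) (F_L2 _ _ Xx' Yy') (L2_Fn _ _ _)
  (FFn _ _ Xx Yy) (FFn _ _ Xx' Yy')).
by rewrite subrr normr0 ltW.
Qed.

Lemma trunc_cov_uniform_cvg :
  (forall eps, 0 < eps -> exists N, forall n, (N <= n)%N -> forall x y,
     x \in `[a, b] -> y \in `[c, e] ->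
     ('E_P[(fun w => (Fn Z g h n x y w - F x y w) ^+ 2)%R] <= eps%:E)%E) ->
  {uniform D `*` D, trunc_cov @ \oo --> cov}.
Proof.
move=> FnF; apply: uniform_cvg_le => eps eps_gt0.
have LF p : D p -> L2 P (F p.1 p.2) by case: p => x y [Xx Yy]; exact: F_L2.
have LFn n p : L2 P (Fn Z g h n p.1 p.2) by exact: L2_Fn.
have FnF_L2 del : 0 < del -> \forall n \near \oo, forall p, D p ->
    inner P (Fn Z g h n p.1 p.2 \- F p.1 p.2) (Fn Z g h n p.1 p.2 \- F p.1 p.2) <= del.
  move=> /FnF [N FnF_N]; exists N => // n /FnF_N FnF_n [x y] [Xx Yy].
  rewrite -lee_fin -innerE; [|exact: L2B (LFn n (x, y)) (LF (x, y) (conj Xx Yy))..].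
  by under eq_integral do rewrite -expr2; move: (FnF_n x y Xx Yy); rewrite unlock.
have := inner_uniform_cvg LF LFn inner_Fn_bounded FnF_L2 _ eps_gt0.
apply: filterS => n Kn [p q] [Dp Dq].
by rewrite /cov /trunc_cov /prod_kernel -inner_Fn; exact: Kn.
Qed.

End truncated_process.

Theorem proposition1 (d : measure_display) (T : measurableType d) (R : realType)
  (P : probability T R) (a b c e : R) (hab : a <= b) (hce : c <= e)
  (Z : nat -> nat -> {RV P >-> R}) (g h : nat -> R -> R)
  (F : R -> R -> {RV P >-> R})
  (hZ2 : forall i j, P.-integrable setT (fun w => ((Z i j w) ^+ 2)%:E))
  (hZ0 : forall i j, ('E_P[Z i j] = 0)%E)
  (hZZ : forall i j i' j',
     ('E_P[(fun w => Z i j w * Z i' j' w)%R] = (kdelta i i' * kdelta j j')%:E)%E)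
  (hg : forall i, {within `[a, b], continuous g i})
  (hh : forall j, {within `[c, e], continuous h j})
  (hF2 : forall x y, x \in `[a, b] -> y \in `[c, e] ->
     P.-integrable setT (fun w => ((F x y w) ^+ 2)%:E))
  (hF0 : forall x y, x \in `[a, b] -> y \in `[c, e] -> ('E_P[F x y] = 0)%E)
  (hconv :
     (exists n : nat, forall x y, x \in `[a, b] -> y \in `[c, e] ->
        {ae P, forall w, F x y w = Fn Z g h n x y w})
     \/
     (forall eps : R, 0 < eps -> exists N : nat, forall n : nat, (N <= n)%N ->
        forall x y, x \in `[a, b] -> y \in `[c, e] ->
          ('E_P[(fun w => (Fn Z g h n x y w - F x y w) ^+ 2)%R] <= eps%:E)%E)) :
  separable_cov `[a, b] `[c, e] (covfun P (fun x y => F x y)) /\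
  {within (`[a, b] `*` `[c, e]) `*` (`[a, b] `*` `[c, e]),
     continuous (covfun P (fun x y => F x y))}.

Proof.
have Z_L2 i j : L2 P (Z i j) by split; [exact: measurable_funPT | exact: hZ2].
have Z_orthonormal i j i' j' : inner P (Z i j) (Z i' j') = kdelta i i' * kdelta j j'.
  by rewrite /inner; move: (hZZ i j i' j'); rewrite unlock => ->.
have F_L2 x y : x \in `[a, b] -> y \in `[c, e] -> L2 P (F x y).
  by move=> Xx Yy; split; [exact: measurable_funPT | exact: hF2].
have -> : covfun P (fun x y => F x y) = fun z => inner P (F z.1.1 z.1.2) (F z.2.1 z.2.2).
  by apply/funext => z; rewrite /covfun unlock.
have [nu cov_cvg] : exists nu : nat -> nat,
    {uniform (`[a, b] `*` `[c, e]) `*` (`[a, b] `*` `[c, e]),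
      (fun n => prod_kernel (trunc_kernel g (nu n)) (trunc_kernel h (nu n))) @ \oo -->
      fun z => inner P (F z.1.1 z.1.2) (F z.2.1 z.2.2)}.
  case: hconv => [[n0 FFn] | FnF].
    by exists (fun=> n0); exact: (trunc_cov_uniform_cvg_ae Z_L2 Z_orthonormal F_L2 n0 FFn).
  by exists id; exact: (trunc_cov_uniform_cvg Z_L2 Z_orthonormal hab hce hg hh F_L2 FnF).
have cov_nnd : nonneg_definite_kernel (`[a, b] `*` `[c, e])
    (fun z => inner P (F z.1.1 z.1.2) (F z.2.1 z.2.2)).
  by apply: (nonneg_definite_inner_kernel _ (fun p => F p.1 p.2)) => -[x y] [Xx Yy]; exact: F_L2.
split.
  apply: (separable_cov_of_limit (symmetric_inner_kernel _ (fun p => F p.1 p.2)) cov_nnd) => z Dz.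
  exact: uniform_cvg_pointwise Dz cov_cvg.
apply: uniform_limit_continuous_subspace cov_cvg.
by near_simpl; apply: nearW => n; exact: (continuous_trunc_cov hg hh).
Qed.
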